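(* Let $X$ be a (Tychonoff) space. (a) If $X$ is a finite $C$-space and $Y\subset X$ is $C^*$-embedded in $X$, then $Y$ is a finite $C$-space. (b) $X$ is a finite $C$-space if and only if its Čech–Stone compactification $\beta X$ is a $C$-space.
   Context: A set is functionally open if it is a cozero set. $Y\subset X$ is $C^*$-embedded if every bounded continuous real function on $Y$ extends to a bounded continuous function on $X$. $X$ is a $C$-space if every sequence $\{\omega_n\}$ of locally finite covers of $X$ by functionally open sets has a $C$-refinement $\{\gamma_n\}$ (each $\gamma_n$ a disjoint family of open sets refining $\omega_n$, with $\bigcup_n\gamma_n$ covering $X$) such that $\bigcup_n\gamma_n$ is a locally finite cover of $X$ by functionally open sets. $X$ is a finite $C$-space if for every sequence $\{\omega_n\}$ of finite covers of $X$ by functionally open sets there exist $k$ and finite families $\gamma_1,\dots,\gamma_k$ of pairwise disjoint functionally open sets such that each $\gamma_n$ refines $\omega_n$ and $\bigcup_{n=1}^k\gamma_n$ covers $X$. *)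

From HB Require Import structures.
From mathcomp Require Import all_boot all_order all_algebra.
From mathcomp Require Import all_classical all_reals topology normedtype.
Set Implicit Arguments.
Unset Strict Implicit.
Unset Printing Implicit Defensive.
Import Order.TTheory GRing.Theory Num.Theory.
Import numFieldNormedType.Exports.
Local Open Scope classical_set_scope.
Local Open Scope ring_scope.

Section CSpaces.
Variable R : realType.

Definition tychonoff_space (X : topologicalType) : Prop :=
  completely_regular_space X /\ hausdorff_space X.

Definition functionally_open {X : topologicalType} (U : set X) : Prop :=
  exists f : X -> R, continuous f /\ U = [set x | f x != 0].

Definition bounded_real {T : Type} (f : T -> R) : Prop :=
  exists M : R, forall x, `|f x| <= M.

Definition C_star_embedded {Z : topologicalType} (Y : set Z) : Prop :=
  forall f : set_type Y -> R, continuous f -> bounded_real f ->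
    exists g : Z -> R, [/\ continuous g, bounded_real g &
                          forall y : set_type Y, g (set_val y) = f y].

Definition is_cover {X : Type} (F : set (set X)) : Prop :=
  forall x, exists A, F A /\ A x.

Definition locally_finite_family {X : topologicalType} (F : set (set X)) : Prop :=
  forall x : X, exists N : set X, nbhs x N /\ finite_set [set A | F A /\ A `&` N !=set0].

Definition refines {X : Type} (G F : set (set X)) : Prop :=
  forall A, G A -> exists B, F B /\ A `<=` B.

Definition pairwise_disjoint_family {X : Type} (G : set (set X)) : Prop :=
  forall A B, G A -> G B -> A <> B -> A `&` B = set0.

Definition C_space (X : topologicalType) : Prop :=
  forall omega : nat -> set (set X),
    (forall n, [/\ is_cover (omega n), locally_finite_family (omega n) &
                   forall A, omega n A -> functionally_open A]) ->
    exists gamma : nat -> set (set X),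
      (forall n, [/\ pairwise_disjoint_family (gamma n),
                     (forall A, gamma n A -> open A) &
                     refines (gamma n) (omega n)]) /\
      (let U := [set A | exists n, gamma n A] in
       [/\ is_cover U, locally_finite_family U &
           forall A, U A -> functionally_open A]).

(** [X] is a finite C-space (families indexed by [n < k], i.e. gamma_0 ..
    gamma_(k-1) instead of gamma_1 .. gamma_k). *)
Definition finite_C_space (X : topologicalType) : Prop :=
  forall omega : nat -> set (set X),
    (forall n, [/\ finite_set (omega n), is_cover (omega n) &
                   forall A, omega n A -> functionally_open A]) ->
    exists (k : nat) (gamma : nat -> set (set X)),
      (forall n, (n < k)%N ->
         [/\ finite_set (gamma n), pairwise_disjoint_family (gamma n),
             (forall A, gamma n A -> functionally_open A) &
             refines (gamma n) (omega n)]) /\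
      is_cover [set A | exists2 n, (n < k)%N & gamma n A].

Definition top_embedding {X K : topologicalType} (e : X -> K) : Prop :=
  [/\ continuous e, injective e &
      forall U : set X, open U -> exists V : set K, open V /\ e @^-1` V = U].

Definition is_stone_cech {X K : topologicalType} (e : X -> K) : Prop :=
  [/\ compact [set: K], hausdorff_space K, top_embedding e,
      dense (range e) & C_star_embedded (range e)].

End CSpaces.

(* The engine is a transfer principle: if every bounded continuous function
   on X factors continuously through phi : X -> S, then S finite C implies X
   finite C.  A finite cozero cover of X is the cozero family of a partition of
   unity; extending it to S and adding the cozero set of (sum - 1) gives a
   finite cozero cover of S whose traces refine the given one, so finite
   C-refinements on S pull back.  This yields (a) for the inclusion of a
   C*-embedded Y, and "beta X C => X finite C", since on a compact space
   C-spaces and finite C-spaces coincide (a locally finite family has finitely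
   many nonempty members).
   For "X finite C => beta X finite C", shrink each cover of beta X to sets
   [1 < h_B], refine their traces on X, and extend a partition of unity
   subordinate to the refinement, each member cut off by max(h_B - 1/2, 0).
   By density of X the extended cozero sets stay disjoint where the traces
   were, lie inside the B's, and cover beta X because their sum is >= 1/2. *)

From HB Require Import structures.
From mathcomp Require Import all_boot all_order all_algebra.
From mathcomp Require Import all_classical all_reals topology normedtype.
From mathcomp Require Import finmap lra.
Set Implicit Arguments.
Unset Strict Implicit.
Unset Printing Implicit Defensive.
Import Order.TTheory GRing.Theory Num.Theory.
Import numFieldNormedType.Exports.
Local Open Scope classical_set_scope.
Local Open Scope ring_scope.

Lemma dense_range_closed (X : Type) (K : topologicalType) (e : X -> K)
    (Q : set K) :
  dense (range e) -> closed Q -> (forall x, Q (e x)) -> forall p, Q p.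
Proof.
move=> de cQ Qe p; apply: contrapT => nQp.
have [y [nQy [x _ exy]]] := de _ (ex_intro _ p nQp) (closed_openC cQ).
by apply: nQy; rewrite -exy.
Qed.

(* [compact_cover] is stated for pointed spaces. *)
Definition pointed_at (K : topologicalType) (k : K) : Type := K.
HB.instance Definition _ (K : topologicalType) (k : K) :=
  Topological.copy (pointed_at k) K.
HB.instance Definition _ (K : topologicalType) (k : K) :=
  isPointed.Build (pointed_at k) k.

Lemma compact_cover_compactT (K : topologicalType) :
  compact [set: K] -> cover_compact [set: K].
Proof.
have [[k _] cK|K0 _] := pselect (exists k : K, True); last first.
  by move=> I D f _ _; exists fset0 => // x; case: K0; exists x.
have : compact [set: pointed_at k] by [].
by rewrite compact_cover.
Qed.

Lemma compact_nat_cover (K : topologicalType) (O : nat -> set K) :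
  compact [set: K] -> (forall n, open (O n)) -> (forall x, exists n, O n x) ->
  exists k, forall x, exists2 n, (n < k)%N & O n x.
Proof.
move=> /compact_cover_compactT cK oO covO.
have [||D _ cD] := cK nat setT O.
- by move=> n _; exact: oO.
- by move=> x _; have [n On] := covO x; exists n.
exists (\max_(n <- D) n).+1 => x; have [n Dn Onx] := cD x I.
by exists n => //; rewrite ltnS; apply: leq_bigmax_seq.
Qed.

Lemma finite_locally_finite (X : topologicalType) (F : set (set X)) :
  finite_set F -> locally_finite_family F.
Proof.
move=> finF x; exists setT; split; first exact: filterT.
by apply: sub_finite_set finF => A [].
Qed.

Lemma compact_locally_finite (K : topologicalType) (F : set (set K)) :
  compact [set: K] -> locally_finite_family F ->
  finite_set [set A | F A /\ A !=set0].
Proof.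
move=> /compact_cover_compactT cK /choice[N hN].
have [||D _ cD] := cK K setT (fun x => interior (N x)).
- by move=> x _; exact: open_interior.
- by move=> x _; exists x => //; exact: (hN x).1.
apply: (@sub_finite_set _ _
  (\bigcup_(x in [set` D]) [set A | F A /\ A `&` N x !=set0])).
  move=> A [FA [a Aa]]; have [x Dx Nxa] := cD a I.
  by exists x => //; split => //; exists a; split => //; exact: interior_subset.
by apply: bigcup_finite => [|x _]; [exact: finite_fset|exact: (hN x).2].
Qed.

Lemma finite_set_graded (T : Type) (F : nat -> set T) (k : nat) :
  (forall n, (n < k)%N -> finite_set (F n)) ->
  finite_set [set q : nat * T | (q.1 < k)%N /\ F q.1 q.2].
Proof.
move=> finF.
apply: (@sub_finite_set _ _ (\bigcup_(n in `I_k) [set (n, A) | A in F n])).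
  by move=> [n A] [/= nk FA]; exists n => //; exists A.
by apply: bigcup_finite => // n nk; apply/finite_image/finF.
Qed.

Section CozeroSets.
Variable R : realType.

Definition cozero {T : Type} (f : T -> R) : set T := [set x | f x != 0].

Lemma continuous_sum (T : topologicalType) (I : Type) (s : seq I)
    (F : I -> T -> R) :
  (forall i, continuous (F i)) -> continuous (fun x => \sum_(i <- s) F i x).
Proof.
move=> cF x.
exact: (@cvg_big R^o I +%R 0 xpredT add_continuous T (nbhs x) s F
  (fun i => F i x) _ (fun i _ => cF i x)).
Qed.

Lemma functionally_open_open (T : topologicalType) (A : set T) :
  functionally_open R A -> open A.
Proof.
by move=> [f [cf ->]]; exact: (proj1 (continuousP f) cf _ (@open_neq R 0)).
Qed.

Lemma functionally_open_ge0 (T : topologicalType) (A : set T) :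
  functionally_open R A ->
  exists f : T -> R, [/\ continuous f, forall x, 0 <= f x & A = cozero f].
Proof.
move=> [f [cf ->]]; exists (fun x => `|f x|); split => //.
- by move=> x; apply: continuous_comp; [exact: cf|exact: norm_continuous].
- by apply/seteqP; split => x; rewrite /cozero /= normr_eq0.
Qed.

Lemma continuous_cutoff (T : topologicalType) (f : T -> R) (c : R) :
  continuous f -> continuous (fun x => Num.max (f x - c) 0).
Proof.
move=> cf; apply: (@max_fun_continuous _ _ R (fun x => f x - c) (fun=> 0)).
  move=> x; apply: (@continuousB _ R^o _ f (fun=> c)); first exact: cf.
  exact: cst_continuous.
exact: cst_continuous.
Qed.

Lemma functionally_open_gt (T : topologicalType) (f : T -> R) (c : R) :
  continuous f -> functionally_open R [set x | c < f x].
Proof.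
move=> cf; exists (fun x => Num.max (f x - c) 0).
split; first exact: continuous_cutoff.
apply/seteqP; split => x /=; rewrite -subr_gt0.
  by move=> cx; rewrite max_l ?ltW // gt_eqF.
by case: leP => [_|//]; rewrite eqxx.
Qed.

Lemma functionally_open_preimage (T S : topologicalType) (phi : T -> S)
    (B : set S) :
  continuous phi -> functionally_open R B -> functionally_open R (phi @^-1` B).
Proof.
move=> cphi [f [cf ->]]; exists (f \o phi); split => //.
by move=> x; apply: continuous_comp; [exact: cphi|exact: cf].
Qed.

Lemma partition_of_unity (T : topologicalType) (I : choiceType) (P : set I)
    (U : I -> set T) :
  finite_set P -> (forall i, P i -> functionally_open R (U i)) ->
  (forall x, exists i, P i /\ U i x) ->
  exists g : I -> T -> R, [/\ forall i, continuous (g i),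
    forall i x, 0 <= g i x <= 1, forall i, P i -> U i = cozero (g i) &
    forall x, \sum_(i <- fset_set P) g i x = 1].
Proof.
move=> finP foU covU.
have /choice[f hf] : forall i, exists f : T -> R, [/\ continuous f,
    forall x, 0 <= f x, P i -> U i = cozero f & ~ P i -> f = 0].
  move=> i; have [Pi|nPi] := pselect (P i).
    by have [f [cf f0 Uf]] := functionally_open_ge0 (foU i Pi); exists f.
  by exists (fun=> 0); split => //; exact: cst_continuous.
have f0 i x : 0 <= f i x by have [_ ->] := hf i.
pose S x := \sum_(i <- fset_set P) f i x.
have fS i x : f i x <= S x.
  have [Pi|nPi] := pselect (P i); last first.
    have [_ _ _ ->] := hf i => //; exact: sumr_ge0.
  have Pi' : i \in fset_set P by rewrite in_fset_set //; exact: mem_set.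
  by rewrite /S (bigD1_seq i Pi' (fset_uniq _)) /= lerDl sumr_ge0.
have S_gt0 x : 0 < S x.
  have [i [Pi Uix]] := covU x; apply: lt_le_trans (fS i x).
  have [_ _ Uf _] := hf i; move: Uix; rewrite (Uf Pi) => fi_neq0.
  by rewrite lt_neqAle eq_sym fi_neq0 f0.
exists (fun i x => f i x / S x); split.
- move=> i x; apply: (@continuousM _ _ (f i) (fun x => (S x)^-1)).
    by have [cf _ _ _] := hf i; exact: cf.
  apply: continuousV; first by rewrite gt_eqF.
  by apply: continuous_sum => j; have [cf _ _ _] := hf j.
- move=> i x; apply/andP; split; first by rewrite divr_ge0 // ltW.
  by rewrite ler_pdivrMr // mul1r.
- move=> i Pi; have [_ _ -> // _] := hf i; apply/seteqP; split => x;
    by rewrite /cozero /= mulf_eq0 invr_eq0 (gt_eqF (S_gt0 x)) orbF.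
- by move=> x; rewrite -mulr_suml -/(S x) divff // gt_eqF.
Qed.

Lemma partition_of_unity_gt (I : eqType) (s : seq I) (h : I -> R) :
  \sum_(i <- s) h i = 1 -> exists2 i, i \in s & ((size s).+1%:R)^-1 < h i.
Proof.
move=> h_sum; set c := _^-1.
have [//|nh] := pselect (exists2 i, i \in s & c < h i).
have : \sum_(i <- s) h i <= \sum_(i <- s) c.
  rewrite big_seq [leRHS]big_seq; apply: ler_sum => i si.
  by rewrite leNgt; apply/negP => ci; apply: nh; exists i.
rewrite h_sum big_const_seq count_predT iter_addr_0 -mulr_natl /c.
by rewrite ler_pdivlMr // mul1r ler_nat ltnn.
Qed.

Lemma cozero_cover_shrink (T : topologicalType) (w : set (set T)) :
  finite_set w -> is_cover w -> (forall B, w B -> functionally_open R B) ->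
  exists h : set T -> T -> R, [/\ forall B, continuous (h B),
    forall B, w B -> B = cozero (h B) &
    forall p, exists B, w B /\ 1 < h B p].
Proof.
move=> finw covw fow.
have [g [cg _ wg g_sum]] := @partition_of_unity _ _ w id finw fow covw.
pose m : R := (size (fset_set w)).+1%:R.
exists (fun B p => m * g B p); split.
- move=> B p; apply: (@continuousM _ _ (fun=> m) (g B)); last exact: cg.
  exact: cst_continuous.
- move=> B wB; rewrite {1}(wg B wB); apply/seteqP; split => p;
    by rewrite /cozero /= mulf_eq0 pnatr_eq0.
- move=> p; have [B] := partition_of_unity_gt (g_sum p).
  rewrite in_fset_set // => /set_mem wB gB; exists B; split => //.
  by rewrite -(@mulfV _ m) ?pnatr_eq0 // ltr_pM2l.
Qed.

Lemma dense_range_ge (X : Type) (K : topologicalType) (e : X -> K)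
    (F : K -> R) (a : R) :
  dense (range e) -> continuous F -> (forall x, a <= F (e x)) ->
  forall p, a <= F p.
Proof.
move=> de cF; apply: (@dense_range_closed _ _ e (F @^-1` [set y | a <= y]) de).
exact: (proj1 (continuous_closedP F) cF _ (@closed_ge R a)).
Qed.

Lemma dense_range_eq0 (X : Type) (K : topologicalType) (e : X -> K)
    (F : K -> R) :
  dense (range e) -> continuous F -> (forall x, F (e x) = 0) ->
  forall p, F p = 0.
Proof.
move=> de cF; apply: (@dense_range_closed _ _ e (F @^-1` [set y | y = 0]) de).
exact: (proj1 (continuous_closedP F) cF _ (@closed_eq R 0)).
Qed.

Lemma dense_range_cozero_disjoint (X K : topologicalType) (e : X -> K)
    (G1 G2 : K -> R) :
  dense (range e) -> continuous G1 -> continuous G2 ->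
  cozero (G1 \o e) `&` cozero (G2 \o e) = set0 ->
  cozero G1 `&` cozero G2 = set0.
Proof.
move=> de cG1 cG2 disj; have G12 p : G1 p * G2 p = 0.
  apply: (@dense_range_eq0 _ _ e (fun p => G1 p * G2 p) de) => [q|x].
    by apply: (@continuousM _ _ G1 G2); [exact: cG1|exact: cG2].
  apply/eqP; rewrite mulf_eq0; apply: contraT.
  rewrite negb_or => /andP[G1x G2x].
  by have : (cozero (G1 \o e) `&` cozero (G2 \o e)) x by []; rewrite disj.
apply/seteqP; split => // p [G1p G2p].
by have /eqP := G12 p; rewrite mulf_eq0 (negbTE G1p) (negbTE G2p).
Qed.

End CozeroSets.

Section CompactCSpaces.
Variable R : realType.

Lemma compact_C_space_finite (K : topologicalType) :
  compact [set: K] -> C_space R K -> finite_C_space R K.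
Proof.
move=> cK CK om hom.
have [|gam [hgam [Ucov Ulf Ufo]]] := CK om.
  move=> n; have [finw covw fow] := hom n; split => //.
  exact: finite_locally_finite.
have [||k kcov] := @compact_nat_cover _ (fun n => \bigcup_(A in gam n) A) cK.
- move=> n; apply: bigcup_open => A gA; have [_ gop _] := hgam n; exact: gop.
- by move=> x; have [A [[n gA] Ax]] := Ucov x; exists n, A.
have finU := compact_locally_finite cK Ulf.
exists k, (fun n => [set A | gam n A /\ A !=set0]); split.
  move=> n _; have [gdis gop gref] := hgam n; split.
  - by apply: sub_finite_set finU => A [gA A0]; split => //; exists n.
  - by move=> A B [gA _] [gB _]; exact: gdis.
  - by move=> A [gA _]; apply: Ufo; exists n.
  - by move=> A [gA _]; exact: gref.
move=> x; have [n nk [A gA Ax]] := kcov x.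
by exists A; split => //; exists n => //; split => //; exists x.
Qed.

Lemma compact_finite_C_space (K : topologicalType) :
  compact [set: K] -> finite_C_space R K -> C_space R K.
Proof.
move=> cK fCK om hom.
have [|k [gam [hgam gcov]]] := fCK (fun n => [set A | om n A /\ A !=set0]).
  move=> n; have [covw lfw fow] := hom n; split.
  - exact: compact_locally_finite.
  - move=> x; have [A [omA Ax]] := covw x.
    by exists A; split => //; split => //; exists x.
  - by move=> A [omA _]; exact: fow.
have finU : finite_set [set A | exists2 n, (n < k)%N & gam n A].
  apply: (@sub_finite_set _ _ (\bigcup_(n in `I_k) gam n)).
    by move=> A [n nk gA]; exists n.
  by apply: bigcup_finite => // n nk; have [] := hgam n nk.
exists (fun n => [set A | (n < k)%N /\ gam n A]); split.
  move=> n; split.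
  - by move=> A B [nk gA] [_ gB]; have [_ gdis _ _] := hgam n nk; exact: gdis.
  - move=> A [nk gA]; have [_ _ gfo _] := hgam n nk.
    exact/functionally_open_open/gfo.
  - move=> A [nk gA]; have [_ _ _ gref] := hgam n nk.
    by have [B [[omB _] AB]] := gref A gA; exists B.
split.
- move=> x; have [A [[n nk gA] Ax]] := gcov x.
  by exists A; split => //; exists n.
- by apply/finite_locally_finite/(sub_finite_set _ finU) => A [n []]; exists n.
- by move=> A [n [nk gA]]; have [_ _ gfo _] := hgam n nk; exact: gfo.
Qed.

End CompactCSpaces.

Section BoundedExtensions.
Variable R : realType.

Definition bounded_extendable {X S : topologicalType} (phi : X -> S) : Prop :=
  forall f : X -> R, continuous f -> bounded_real f ->
    exists g : S -> R, continuous g /\ forall x, g (phi x) = f x.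

Lemma bounded_extendable_family (X S : topologicalType) (phi : X -> S)
    (I : Type) (g : I -> X -> R) :
  bounded_extendable phi -> (forall i, continuous (g i)) ->
  (forall i x, 0 <= g i x <= 1) ->
  exists G : I -> S -> R,
    (forall i, continuous (G i)) /\ forall i x, G i (phi x) = g i x.
Proof.
move=> ext cg g01; have /choice[G hG] : forall i, exists G : S -> R,
    continuous G /\ forall x, G (phi x) = g i x.
  move=> i; apply: ext (cg i) _; exists 1 => x.
  by have /andP[g0 g1] := g01 i x; rewrite ger0_norm.
by exists G; split => i; have [] := hG i.
Qed.

Lemma C_star_embedded_extendable (X : topologicalType) (Y : set X) :
  C_star_embedded R Y -> bounded_extendable (@set_val X Y).
Proof. by move=> cY f cf bf; have [g [cg _ gf]] := cY f cf bf; exists g. Qed.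

Lemma stone_cech_extendable (X K : topologicalType) (e : X -> K) :
  is_stone_cech R e -> bounded_extendable e.
Proof.
move=> [_ _ [ce e_inj e_open] _ cstar] f cf [M bM].
have /choice[psi psiK] :
    forall y : set_type (range e), exists x, e x = set_val y.
  by move=> [p p_e]; have [x _ exp] := set_mem p_e; exists x.
have cfpsi : continuous (f \o psi).
  apply/continuousP => B oB.
  have [V [oV eV]] := e_open (f @^-1` B) (proj1 (continuousP f) cf B oB).
  exists V => //; apply/seteqP; split => y /=.
    move=> Vy; have : (e @^-1` V) (psi y) by rewrite /= psiK.
    by rewrite eV.
  by move=> Bf; have : (f @^-1` B) (psi y) by []; rewrite -eV /= psiK.
have [|g [cg _ gf]] := cstar (f \o psi) cfpsi.
  by exists M => y; exact: bM.
exists g; split => // x.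
have := gf (exist _ (e x) (mem_set (imageT e x))); rewrite /= => ->.
by congr f; apply: e_inj; rewrite psiK.
Qed.

Lemma bounded_extendable_cover (X S : topologicalType) (phi : X -> S)
    (w : set (set X)) :
  bounded_extendable phi -> w !=set0 -> finite_set w -> is_cover w ->
  (forall A, w A -> functionally_open R A) ->
  exists W : set (set S), [/\ finite_set W, is_cover W,
    forall B, W B -> functionally_open R B &
    refines [set phi @^-1` B | B in W] w].
Proof.
move=> ext [A0 wA0] finw covw fow.
have [g [cg g01 wg g_sum]] := @partition_of_unity R _ _ w id finw fow covw.
have [G [cG Ge]] := bounded_extendable_family ext cg g01.
pose sumG s := \sum_(A <- fset_set w) G A s.
have sumG_phi x : sumG (phi x) = 1.
  rewrite -(g_sum x) /sumG !big_seq; apply: eq_bigr => A _; exact: Ge.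
exists ([set cozero (G A) | A in w] `|` [set cozero (fun s => sumG s - 1)]).
split.
- by rewrite finite_setU; split; [exact: finite_image|exact: finite_set1].
- move=> s; have [[A wA GAs]|nG] := pselect (exists2 A, w A & G A s != 0).
    by exists (cozero (G A)); split => //; left; exists A.
  exists (cozero (fun s => sumG s - 1)); split; first by right.
  rewrite /cozero /= subr_eq0 /sumG big_seq big1 1?eq_sym ?oner_neq0 // => A.
  rewrite in_fset_set // => /set_mem wA.
  by apply/eqP; apply: contra_notT nG => GAs; exists A.
- move=> B [[A _ <-]|->]; first by exists (G A).
  exists (fun s => sumG s - 1); split => //.
  move=> s; apply: continuousB; first exact: continuous_sum.
  exact: cst_continuous.
- move=> _ [B [[A wA <-]|->] <-].
    exists A; split => // x; rewrite /cozero /= Ge.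
    by move=> gAx; rewrite (wg A wA).
  by exists A0; split => // x; rewrite /cozero /= sumG_phi subrr eqxx.
Qed.

Lemma bounded_extendable_finite_C_space (X S : topologicalType) (phi : X -> S) :
  continuous phi -> bounded_extendable phi ->
  finite_C_space R S -> finite_C_space R X.
Proof.
move=> cphi ext fCS om hom.
have [[x0 _]|X0] := pselect (exists x : X, True); last first.
  by exists 0%N, (fun=> set0); split => // x; case: X0; exists x.
have /choice[W hW] : forall n, exists W : set (set S), [/\ finite_set W,
    is_cover W, forall B, W B -> functionally_open R B &
    refines [set phi @^-1` B | B in W] (om n)].
  move=> n; have [finw covw fow] := hom n.
  apply: bounded_extendable_cover => //.
  by have [A [wA _]] := covw x0; exists A.
have [|k [gam [hgam gcov]]] := fCS W; first by move=> n; have [] := hW n.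
exists k, (fun n => [set phi @^-1` B | B in gam n]); split.
  move=> n nk; have [gfin gdis gfo gref] := hgam n nk.
  have [_ _ _ Wref] := hW n; split.
  - exact: finite_image.
  - move=> _ _ [B gB <-] [C gC <-] BC.
    rewrite -preimage_setI (gdis _ _ gB gC) ?preimage_set0 // => BC'.
    by apply: BC; rewrite BC'.
  - by move=> _ [B gB <-]; exact: functionally_open_preimage (gfo B gB).
  - move=> _ [B gB <-]; have [B' [WB' BB']] := gref B gB.
    have [A [omA sA]] := Wref _ (imageP _ WB').
    by exists A; split => // x Bx; apply/sA/BB'.
move=> x; have [B [[n nk gB] Bx]] := gcov (phi x).
by exists (phi @^-1` B); split => //; exists n => //; exists B.
Qed.

Lemma dense_lift_cover (X K : topologicalType) (e : X -> K) (I : choiceType)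
    (P : set I) (U : I -> set X) (u : I -> K -> R) :
  dense (range e) -> bounded_extendable e -> finite_set P ->
  (forall i, P i -> functionally_open R (U i)) ->
  (forall x, exists i, P i /\ U i x) -> (forall i, continuous (u i)) ->
  (forall i x, P i -> U i x -> 1 < u i (e x)) ->
  exists W : I -> set K, [/\ forall i, functionally_open R (W i),
    forall i, W i `<=` [set p | 0 < u i p],
    forall i j, P i -> P j -> U i `&` U j = set0 -> W i `&` W j = set0 &
    forall p, exists i, P i /\ W i p].
Proof.
move=> de ext finP foU covU cu Uu.
have [g [cg g01 Ug g_sum]] := partition_of_unity finP foU covU.
have g0 i x : 0 <= g i x by have /andP[] := g01 i x.
have [G [cG Ge]] := bounded_extendable_family ext cg g01.
have GU i : P i -> cozero (G i \o e) = U i.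
  move=> Pi; rewrite (Ug i Pi); apply/seteqP; split => x;
    by rewrite /cozero /= Ge.
pose ramp i p := Num.max (u i p - 2^-1) 0.
pose H i p := G i p * ramp i p.
have cH i : continuous (H i).
  move=> p; apply: (@continuousM _ _ (G i) (ramp i)); first exact: cG.
  exact: continuous_cutoff.
have ramp_gt0 i p : ramp i p != 0 -> 0 < u i p.
  rewrite /ramp; have [_|gt0] := leP (u i p - 2^-1) 0; first by rewrite eqxx.
  by move=> _; lra.
have ramp_ge i x : P i -> U i x -> 2^-1 <= ramp i (e x).
  move=> Pi Uix; have := Uu i x Pi Uix; rewrite /ramp le_max => u_gt1.
  by apply/orP; left; lra.
exists (fun i => cozero (H i)); split.
- by move=> i; exists (H i).
- by move=> i p; rewrite /cozero /H /= mulf_eq0 negb_or => /andP[_ /ramp_gt0].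
- move=> i j Pi Pj Uij; apply/seteqP; split => // p [/= Wi Wj].
  have GG : cozero (G i) `&` cozero (G j) = set0.
    apply: (dense_range_cozero_disjoint de (cG i) (cG j)).
    by rewrite !GU.
  suff : (cozero (G i) `&` cozero (G j)) p by rewrite GG.
  move: Wi Wj; rewrite /cozero /H /= !mulf_eq0 !negb_or.
  by move=> /andP[Gi _] /andP[Gj _].
- move=> p; pose F q := \sum_(i <- fset_set P) H i q.
  have F_ge : 2^-1 <= F p.
    apply: (@dense_range_ge R _ _ e F _ de) => [|x].
      exact: continuous_sum.
    rewrite -[2^-1]mul1r -{1}(g_sum x) mulr_suml /F !big_seq.
    apply: ler_sum => i.
    rewrite in_fset_set // /H Ge => /set_mem Pi.
    have [->|gi] := eqVneq (g i x) 0; first by rewrite !mul0r.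
    rewrite ler_wpM2l ?g0 //; apply: ramp_ge => //.
    by rewrite (Ug i Pi).
  apply: contrapT => nH; move: F_ge; rewrite /F big_seq big1 => [|i]; first lra.
  rewrite in_fset_set // => /set_mem Pi; apply: contrapT => Hi.
  by apply: nH; exists i; split => //; exact/eqP.
Qed.

Lemma stone_cech_finite_C_space (X K : topologicalType) (e : X -> K) :
  is_stone_cech R e -> finite_C_space R X -> finite_C_space R K.
Proof.
move=> sc fCX om hom; have [_ _ [ce _ _] de _] := sc.
have /choice[h hh] : forall n, exists h : set K -> K -> R,
    [/\ forall B, continuous (h B), forall B, om n B -> B = cozero (h B) &
        forall p, exists B, om n B /\ 1 < h B p].
  by move=> n; have [finw covw fow] := hom n; exact: cozero_cover_shrink.
pose V n B := e @^-1` [set p | 1 < h n B p].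
have [|k [gam [hgam gcov]]] := fCX (fun n => [set V n B | B in om n]).
  move=> n; have [finw _ _] := hom n; have [ch _ covh] := hh n; split.
  - exact: finite_image.
  - move=> x; have [B [omB hB]] := covh (e x).
    by exists (V n B); split => //; exists B.
  - by move=> _ [B _ <-]; exact/functionally_open_preimage/functionally_open_gt.
pose P := [set q : nat * set X | (q.1 < k)%N /\ gam q.1 q.2].
have /choice[Bs hBs] : forall q, exists B, P q -> om q.1 B /\ q.2 `<=` V q.1 B.
  move=> [n A]; have [[/= nk gA]|nP] := pselect (P (n, A)); last by exists set0.
  have [_ _ _ gref] := hgam n nk; have [_ [[B omB <-] AV]] := gref A gA.
  by exists B.
have [|||||W [Wfo Wpos Wdis Wcov]] := @dense_lift_cover X K e _ P snd
    (fun q => h q.1 (Bs q)) de (stone_cech_extendable sc).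
- by apply: finite_set_graded => n nk; have [] := hgam n nk.
- by move=> [n A] [/= nk gA]; have [_ _ gfo _] := hgam n nk; exact: gfo.
- by move=> x; have [A [[n nk gA] Ax]] := gcov x; exists (n, A).
- by move=> q; have [ch _ _] := hh q.1.
- by move=> q x Pq /(hBs q Pq).2.
exists k, (fun n => [set W (n, A) | A in gam n]); split.
  move=> n nk; have [gfin gdis _ _] := hgam n nk; split.
  - exact: finite_image.
  - move=> _ _ [A gA <-] [A' gA' <-] WAA'; apply: Wdis => //.
    by apply: gdis => //= AA'; apply: WAA'; rewrite AA'.
  - by move=> _ [A _ <-]; exact: Wfo.
  - move=> _ [A gA <-]; have [omB _] := hBs (n, A) (conj nk gA).
    exists (Bs (n, A)); split => // p /Wpos /= hp; have [_ hB _] := hh n.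
    by rewrite (hB _ omB) /cozero /= gt_eqF.
move=> p; have [[n A] [[/= nk gA] Wp]] := Wcov p.
by exists (W (n, A)); split => //; exists n => //; exists A.
Qed.

End BoundedExtensions.

Unset Implicit Arguments.

Theorem proposition2p2 (R : realType) (X : topologicalType) (hX : tychonoff_space X) :
  (finite_C_space R X ->
     forall Y : set X, C_star_embedded R Y -> finite_C_space R (set_type Y)) /\
  (forall (K : topologicalType) (e : X -> K), is_stone_cech R e ->
     (finite_C_space R X <-> C_space R K)).
Proof.
split.
  move=> fCX Y cY; apply: (bounded_extendable_finite_C_space _
    (C_star_embedded_extendable cY)) => //.
  exact: initial_continuous.
move=> K e sc; have [cK _ [ce _ _] _ _] := sc; split.
  move=> fCX; apply: compact_finite_C_space cK _.
  exact: stone_cech_finite_C_space sc fCX.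
move=> CK.
apply: (bounded_extendable_finite_C_space ce (stone_cech_extendable sc)).
exact: compact_C_space_finite.
Qed.
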